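(* For $n\in\mathbb{N}$, $z(n)=f(n)$ if and only if $n=0$ or $n=F_{2k+1}$ for some integer $k\ge0$.
   Context: $\mathbb{N}=\{0,1,2,\dots\}$. Fibonacci numbers: $F_0=0$, $F_1=1$, $F_k=F_{k-1}+F_{k-2}$. The sequence $f:\mathbb{N}\to\mathbb{N}$ is defined greedily: $f(0)=0$, and for $n\ge1$, $f(n)$ is the least natural number such that (i) $f(n)\notin\{f(0),f(1),\dots,f(n-1)\}$ and (ii) $\sum_{1\le i\le n} f(i)$ is divisible by $n$. The sequence $z:\mathbb{N}\to\mathbb{N}$ is defined greedily: $z(0)=0$, and for $n\ge1$, $z(n)$ is the least natural number such that (i) $z(n)\notin\{z(0),\dots,z(n-1)\}$ and (ii) $\sum_{2\le i\le n} z(i)$ is divisible by $n+1$ (the empty sum being $0$). *)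

From mathcomp Require Import all_boot.
Set Implicit Arguments. Unset Strict Implicit. Unset Printing Implicit Defensive.

Fixpoint fib (k : nat) : nat :=
  match k with
  | 0 => 0
  | 1 => 1
  | (k'.+1 as k1).+1 => fib k1 + fib k'
  end.

Definition greedy_ok (lo d : nat) (g : nat -> nat) (n m : nat) : Prop :=
  (m \notin [seq g i | i <- iota 0 n]) /\
  (n + d %| \sum_(lo <= i < n.+1) (if i == n then m else g i)).

Definition greedy_seq (lo d : nat) (g : nat -> nat) : Prop :=
  g 0 = 0 /\
  forall n, 0 < n ->
    greedy_ok lo d g n (g n) /\
    (forall m, greedy_ok lo d g n m -> g n <= m).

Definition is_f (f : nat -> nat) : Prop := greedy_seq 1 0 f.
Definition is_z (z : nat -> nat) : Prop := greedy_seq 2 1 z.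

From mathcomp Require Import all_boot zify.
Set Implicit Arguments. Unset Strict Implicit. Unset Printing Implicit Defensive.

(* The proof computes both greedy sequences in closed form.  For a constant
   c <= 2 let r_c(n) be the largest a with a(a + n) + c <= n^2 (so that
   r_c(n) is close to n / phi), and put
       g_c(n) = r_c(n) + 1   if r_c(n) = r_c(n-1)       (a "small" step),
       g_c(n) = n + r_c(n)   if r_c(n) = r_c(n-1) + 1   (a "large" step).
   Then f(n) = g_0(n) and z(n) = g_2(n+1) - 1 for n >= 2.
   - Section QuadraticRoot develops r_c and g_c: r_c grows by 0 or 1 per
     step, the partial sums of g_c are n (r_c(n) + 1), g_c is injective,
     every value v > c up to r_c(n) is taken by g_c before n (at a "mirror"
     index n - r_c(n)), and divisibility leaves 0 and r_c(N) as the only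
     smaller values congruent to g_c(N).
   - Greedy sequences are unique, and [greedy_seqI] is a sufficient
     criterion; [fval] and [zval] meet it, hence f = fval and z = zval.
   - For n >= 2, z(n) = f(n) forces large steps of r_0 at n and of r_2 at
     n + 1 with r_0(n) = r_2(n+1) = a, i.e. a(a + n) + 1 = n^2, and
     conversely; by Cassini's identity the solutions of this equation are
     exactly n = F_(2k+1), a = F_(2k). *)

Section QuadraticRoot.
Variable c : nat.
Hypothesis c_small : c <= 2.

Fixpoint qroot (n : nat) : nat :=
  if n is k.+1 then
    let m := qroot k in if m.+1 * (m.+1 + n) + c <= n * n then m.+1 else m
  else 0.

Lemma qroot_step n : qroot n.+1 = qroot n \/ qroot n.+1 = (qroot n).+1.
Proof. by rewrite /=; case: ifP; [right | left]. Qed.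

Lemma qroot_mono : {homo qroot : m n / m <= n}.
Proof.
move=> m n /subnK <-; elim: (n - m) => [|k IH] //.
by rewrite addSn; case: (qroot_step (k + m)) => ->; lia.
Qed.

Lemma qroot_sq n : 0 < qroot n -> c <= n * n.
Proof. elim: n => [|n IH] //=; case: ifP => [H _ | _ /IH]; nia. Qed.

(* The defining property of r_c: r_c(n) is the largest a with
   a(a + n) + c <= n^2.  The bound c <= 2 keeps the maximum from jumping. *)
Lemma qroot_spec n : c <= n * n ->
  qroot n * (qroot n + n) + c <= n * n /\
  n * n < (qroot n).+1 * ((qroot n).+1 + n) + c.
Proof.
elim: n => [|n IH] /= Hc; first by split; lia.
have [Hcn | Hcn] := leqP c (n * n).
  have [L U] := IH Hcn.
  by case: ifP => H; split; nia.
have -> : qroot n = 0 by case: (posnP (qroot n)) => // /qroot_sq; lia.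
by case: ifP => H; split; nia.
Qed.

Lemma qroot_lower n : c <= n * n -> qroot n * (qroot n + n) + c <= n * n.
Proof. by move/qroot_spec => []. Qed.

(* The upper half holds for every n (r_c(n) = 0 when c > n^2). *)
Lemma qroot_upper n : n * n < (qroot n).+1 * ((qroot n).+1 + n) + c.
Proof.
have [/qroot_spec [] // | Hcn] := leqP c (n * n).
have -> : qroot n = 0 by case: (posnP (qroot n)) => // /qroot_sq; lia.
lia.
Qed.

Lemma qroot_geP n k : c <= n * n -> (k <= qroot n <-> k * (k + n) + c <= n * n).
Proof.
move=> Hc; have L := qroot_lower Hc; have U := qroot_upper n; split => H.
  by apply: leq_trans L; rewrite leq_add2r leq_mul // leq_add2r.
case: (leqP k (qroot n)) => // Hk.
have : (qroot n).+1 * ((qroot n).+1 + n) <= k * (k + n) by apply: leq_mul; lia.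
lia.
Qed.

Lemma qroot_leP n k : qroot n <= k <-> n * n < k.+1 * (k.+1 + n) + c.
Proof.
have U := qroot_upper n; split => H.
  by apply: (leq_trans U); rewrite leq_add2r leq_mul // leq_add2r.
case: (leqP (qroot n) k) => // Hk.
have := proj1 (qroot_geP k.+1 (qroot_sq (leq_ltn_trans (leq0n k) Hk))) Hk.
lia.
Qed.

Lemma qroot_eq n a :
  a * (a + n) + c <= n * n -> n * n < a.+1 * (a.+1 + n) + c -> qroot n = a.
Proof.
move=> Lo Up; apply/eqP; rewrite eqn_leq; apply/andP; split; first exact/qroot_leP.
by apply/qroot_geP => //; lia.
Qed.

Lemma qroot_lt n : 0 < n -> qroot n < n.
Proof.
move=> Hn; have /qroot_leP : n * n < n.-1.+1 * (n.-1.+1 + n) + c.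
  by rewrite prednK //; nia.
lia.
Qed.

(* Since r_c(n) is close to n / phi, it grows by at least 1 over two steps
   and by at most 2 over three steps. *)
Lemma qroot_step2 n : c <= n * n -> (qroot n).+1 <= qroot n.+2.
Proof.
move=> Hc; apply/qroot_geP; first nia.
by move: (qroot_lower Hc); move: (qroot n) => a; nia.
Qed.

Lemma qroot_step3 n : qroot n.+3 <= (qroot n).+2.
Proof. by apply/qroot_leP; move: (qroot_upper n); move: (qroot n) => a; nia. Qed.

Definition gval (n : nat) : nat :=
  if qroot n == qroot n.-1 then (qroot n).+1 else n + qroot n.

Lemma gval_cases n : 0 < n ->
  (qroot n = qroot n.-1 /\ gval n = (qroot n).+1) \/
  (qroot n = (qroot n.-1).+1 /\ gval n = n + qroot n).
Proof.
case: n => // n _; rewrite /gval [n.+1.-1]/=.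
case: (qroot_step n) => ->; [left | right]; split => //; first by rewrite eqxx.
by case: eqP => //; lia.
Qed.

Lemma sum_gval n : \sum_(1 <= i < n.+1) gval i = n * (qroot n).+1.
Proof.
elim: n => [|n IH]; first by rewrite big_geq.
rewrite big_nat_recr //= IH.
by case: (gval_cases (ltn0Sn n)) => /= -[-> ->]; nia.
Qed.

(* A value r_c(s) + 1 of a small step never equals a value l + r_c(l) of a
   large step: with w = r_c(l), r_c jumps over l + w - 1 between the
   indices 2l + w - 2 and 2l + w. *)
Lemma gval_mix s l : 0 < s -> 0 < l ->
  qroot s = qroot s.-1 -> qroot l = (qroot l.-1).+1 -> gval s <> gval l.
Proof.
move=> Hs Hl Hsmall Hlarge.
rewrite /gval Hsmall eqxx Hlarge; case: eqP => [|_]; first lia.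
rewrite -Hlarge -Hsmall => E.
have Hcl : c <= l * l by apply: qroot_sq; rewrite Hlarge.
move: (qroot_upper l.-1) (qroot_lower Hcl); rewrite (_ : qroot l.-1 = (qroot l).-1); last lia.
have w_pos : 0 < qroot l by rewrite Hlarge.
move: (qroot l) w_pos E => w w_pos E Up Lo.
have H1 : qroot (2 * l + w - 2) <= l + w - 2.
  by apply/qroot_leP; move: Up; clear -Hl w_pos; nia.
have H2 : l + w <= qroot (2 * l + w).
  by apply/qroot_geP; [nia | move: Lo; clear; nia].
have H3 : 2 * l + w <= s.
  case: (leqP (2 * l + w) s) => // H.
  have := qroot_mono (_ : s.-1 <= 2 * l + w - 2); lia.
have := qroot_mono H3; lia.
Qed.

Lemma gval_inj i n : 0 < i -> i < n -> c <= i.-1 * i.-1 -> gval i <> gval n.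
Proof.
move=> Hi Hin Hc; have Hn : 0 < n by lia.
case: (gval_cases Hi) => -[Ei Gi]; case: (gval_cases Hn) => -[En Gn].
- rewrite Gi Gn; have := qroot_step2 Hc; rewrite prednK // => H.
  have := qroot_mono Hin; lia.
- exact: gval_mix.
- by move=> /esym; apply: gval_mix.
- rewrite Gi Gn; have := qroot_mono (ltnW Hin); lia.
Qed.

Lemma gval_pos n : 0 < gval n.
Proof. by rewrite /gval; case: n => [|n]; rewrite ?eqxx //; case: eqP. Qed.

(* The mirror index: if r_c makes large steps at n and n + 1 with
   r_c(n) = a, then j = n - a carries the value a + 1, because the
   substitution (n, a) -> (n - a, 2a + 1 - n) turns the inequalities
   describing r_c around n into those saying that r_c(j) = 2a + 1 - n with
   a large step at j. *)
Lemma gval_mirror n a : c < a.+1 -> 0 < a -> a < n ->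
  n.-1 * n.-1 < a * (a + n.-1) + c ->
  a.+1 * (a.+1 + n.+1) + c <= n.+1 * n.+1 ->
  n.+2 * n.+2 < a.+2 * (a.+2 + n.+2) + c ->
  gval (n - a) = a.+1.
Proof.
move=> Hca Ha Han P1 P2 P3.
have Hn2a : n <= 2 * a by clear -c_small Hca Ha Han P3; nia.
have [t Ht] : exists t, t + n = (2 * a).+1 by exists ((2 * a).+1 - n); lia.
have [j Hj] : exists j, j + a = n by exists (n - a); lia.
rewrite -Hj addnK.
have Hj0 : 0 < j by lia.
have Ht0 : 0 < t by lia.
have Lj : t * (t + j) + c <= j * j by clear -c_small P2 Hj Ht; nia.
have Uj : j * j < t.+1 * (t.+1 + j) + c by clear -c_small P3 Hj Ht; nia.
have Uj1 : j.-1 * j.-1 < t.-1.+1 * (t.-1.+1 + j.-1) + c.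
  by clear -c_small P1 Hj Ht Hj0 Ht0; nia.
have Qj : qroot j = t by apply: qroot_eq.
have Qj1 : qroot j.-1 <= t.-1 by apply/qroot_leP.
case: (gval_cases Hj0) => -[Ej ->]; lia.
Qed.

Lemma gval_attained n v : c < v -> v <= qroot n -> exists2 i, 0 < i < n & gval i = v.
Proof.
move=> Hv; elim: n => [|n IH] Hvn; first by case: v Hv Hvn.
case: (leqP v (qroot n)) => Hvn'.
  by have [i /andP [Hi1 Hi2] Ei] := IH Hvn'; exists i => //; rewrite Hi1 ltnW.
have Hn : 0 < n by move: Hvn; case: (posnP n) => [-> /=|//]; lia.
have Ev : v = (qroot n).+1 by case: (qroot_step n) => E; lia.
case: (gval_cases Hn) => -[En Gn].
  by exists n; [rewrite Hn ltnSn | rewrite Gn Ev].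
have Hlarge : qroot n.+1 = (qroot n).+1 by have := qroot_step n; lia.
have Hc : c <= n.+1 * n.+1 by apply: qroot_sq; rewrite Hlarge.
have P1 := qroot_upper n.-1.
have P2 := qroot_lower Hc.
have Q3 : qroot n.+2 <= (qroot n).+1.
  by have := qroot_step3 n.-1; rewrite -En (_ : n.-1.+3 = n.+2); lia.
have P3 := proj1 (qroot_leP _ _) Q3.
have Hna := qroot_lt Hn.
rewrite Hlarge in P2.
rewrite (_ : qroot n.-1 = (qroot n).-1) in P1; last lia.
have Ha : 0 < qroot n by rewrite En.
rewrite Ev; move: (qroot n) Ev Hv Ha Hna P1 P2 P3 => a -> Hv Ha Hna P1 P2 P3.
rewrite prednK // in P1.
exists (n - a); last exact: gval_mirror.
lia.
Qed.

Lemma gval_min N m : 0 < N -> m < gval N -> N %| gval N - m -> m = 0 \/ m = qroot N.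
Proof.
move=> HN Hm /dvdnP [k Hk]; have HrN := qroot_lt HN.
have Hk1 : k = 1.
  by case: (gval_cases HN) => -[_ Gn]; rewrite Gn in Hm Hk; nia.
by case: (gval_cases HN) => -[_ Gn]; rewrite Gn Hk1 in Hk; lia.
Qed.
End QuadraticRoot.

Lemma qroot_antimono c c' n : c' <= 2 -> c <= c' -> qroot c' n <= qroot c n.
Proof.
move=> Hc' Hcc'; apply/qroot_leP => //.
by have := qroot_upper (c := c) (leq_trans Hcc' Hc') n; lia.
Qed.

Lemma notin_iota (g : nat -> nat) n m :
  (m \notin [seq g i | i <- iota 0 n]) <-> (forall i, i < n -> g i <> m).
Proof.
split=> [H i Hi Egi | H].
  by move/negP: H; apply; apply/mapP; exists i; rewrite ?mem_iota.
by apply/mapP => -[i]; rewrite mem_iota => /andP [_ Hi] Em; apply: (H i Hi).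
Qed.

Lemma sum_set_last lo n (g : nat -> nat) m : lo <= n ->
  \sum_(lo <= i < n.+1) (if i == n then m else g i) = \sum_(lo <= i < n) g i + m.
Proof.
move=> Hlo; rewrite big_nat_recr //= eqxx; congr (_ + _).
by apply: eq_big_nat => i /andP [_ Hi]; rewrite ifN // neq_ltn Hi.
Qed.

Lemma greedy_unique lo d g h :
  greedy_seq lo d g -> greedy_seq lo d h -> forall n, g n = h n.
Proof.
move=> [g0 Hg] [h0 Hh] n; elim/ltn_ind: n => n IH.
case: (posnP n) => Hn; first by rewrite Hn g0 h0.
have Eok m : greedy_ok lo d g n m <-> greedy_ok lo d h n m.
  rewrite /greedy_ok; have -> : [seq g i | i <- iota 0 n] = [seq h i | i <- iota 0 n].
    by apply/eq_in_map => i; rewrite mem_iota => /andP [_ Hi]; apply: IH.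
  rewrite (eq_big_nat _ _ (F2 := fun i => if i == n then m else h i)) //.
  by move=> i /andP [_ Hi]; case: eqP => // Hin; apply: IH; lia.
have [okg ming] := Hg n Hn; have [okh minh] := Hh n Hn.
by apply/eqP; rewrite eqn_leq ming ?minh //; apply/Eok.
Qed.

Lemma greedy_seqI lo d g : g 0 = 0 ->
  (forall i n, i < n -> g i <> g n) ->
  (forall n, 0 < n -> n + d %| \sum_(lo <= i < n.+1) g i) ->
  (forall n m, 0 < n -> (forall i, i < n -> g i <> m) ->
     n + d %| \sum_(lo <= i < n.+1) (if i == n then m else g i) -> g n <= m) ->
  greedy_seq lo d g.
Proof.
move=> g0 g_inj g_dvd g_min; split=> // n Hn; split; last first.
  by move=> m [/notin_iota Hm Hdvd]; apply: g_min.
split; first by apply/notin_iota => i Hi; apply: g_inj.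
by rewrite (eq_bigr g) ?g_dvd // => i _; case: eqP => [->|].
Qed.

Definition fval (n : nat) : nat := if n is 0 then 0 else gval 0 n.

Lemma sum_fval n : \sum_(1 <= i < n.+1) fval i = n * (qroot 0 n).+1.
Proof.
rewrite -(sum_gval (c := 0) isT); apply: eq_big_nat => i /andP [Hi _].
by case: i Hi.
Qed.

Lemma fval_inj i n : i < n -> fval i <> fval n.
Proof.
case: n => // n; case: i => [_ | i Hin] /=.
  by have := gval_pos 0 n.+1; case: (gval 0 n.+1).
by apply: gval_inj.
Qed.

(* Minimality: a smaller candidate would be 0 or r_0(n), both used before. *)
Lemma fval_min n m : 0 < n -> (forall i, i < n -> fval i <> m) ->
  n %| \sum_(1 <= i < n) fval i + m -> fval n <= m.
Proof.
case: n => // n _ Hm Hdvd; case: (leqP (fval n.+1) m) => // Hlt; exfalso.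
have Hdiff : n.+1 %| fval n.+1 - m.
  have Hfull : n.+1 %| \sum_(1 <= i < n.+1) fval i + fval n.+1.
    by rewrite -big_nat_recr // sum_fval dvdn_mulr.
  by have := dvdn_sub Hfull Hdvd; rewrite subnDl.
have Em : m = 0 \/ m = qroot 0 n.+1 := gval_min (c := 0) isT (ltn0Sn n) Hlt Hdiff.
case: (posnP m) => [m0 | m_pos]; first by apply: (Hm 0) => //; rewrite m0.
have m_le : m <= qroot 0 n.+1 by case: Em m_pos => ->.
have [i /andP [i_pos Hi] Ei] := gval_attained (c := 0) isT m_pos m_le.
by apply: (Hm i Hi); case: i i_pos Hi Ei.
Qed.

Lemma fval_greedy : is_f fval.
Proof.
apply: greedy_seqI => // [i n|n Hn|n m Hn Hm]; first exact: fval_inj.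
  by rewrite addn0 sum_fval dvdn_mulr.
by rewrite sum_set_last // addn0; apply: fval_min.
Qed.

Definition zval (n : nat) : nat := if n <= 1 then n else (gval 2 n.+1).-1.

Lemma zvalE n : 1 < n -> zval n = (gval 2 n.+1).-1.
Proof. by rewrite /zval ltnNge => /negbTE ->. Qed.

Lemma sum_zval n : 0 < n -> \sum_(2 <= i < n.+1) zval i = n.+1 * qroot 2 n.+1.
Proof.
elim: n => [|n IH] // _; case: (posnP n) => [-> | Hn]; first by rewrite big_geq.
rewrite big_nat_recr /=; last lia.
rewrite IH // zvalE; last lia.
by case: (gval_cases (c := 2) isT (ltn0Sn n.+1)) => -[/= E ->]; nia.
Qed.

Lemma zval_ge2 n : 1 < n -> 1 < zval n.
Proof.
move=> Hn; rewrite zvalE //.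
case: (gval_cases (c := 2) isT (ltn0Sn n)) => -[/= E ->]; last lia.
case: (ltngtP n 2) E => [|Hn3 _|-> //]; first lia.
by have := qroot_mono (c := 2) isT (_ : 4 <= n.+1); apply; lia.
Qed.

Lemma zval_inj i n : i < n -> zval i <> zval n.
Proof.
move=> Hin; case: (leqP n 1) => Hn.
  by have [-> ->] : i = 0 /\ n = 1 by lia.
have Hzn := zval_ge2 Hn.
case: (leqP i 1) => Hi; first by rewrite {1}/zval Hi; lia.
rewrite !zvalE // => E.
have := gval_pos 2 i.+1; have := gval_pos 2 n.+1.
have : gval 2 i.+1 <> gval 2 n.+1 by apply: gval_inj => //; nia.
lia.
Qed.

(* Minimality: a smaller candidate m would have m + 1 = r_2(n + 1), a value
   of g_2 taken before, so m itself is a value of z before n. *)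
Lemma zval_min n m : 0 < n -> (forall i, i < n -> zval i <> m) ->
  n + 1 %| \sum_(2 <= i < n.+1) (if i == n then m else zval i) -> zval n <= m.
Proof.
move=> Hn Hm Hdvd; case: (leqP n 1) => Hn1.
  have n1 : n = 1 by lia.
  by subst n; case: m Hm {Hdvd} => // /(_ 0 isT) [].
rewrite sum_set_last // in Hdvd.
case: (leqP (zval n) m) => // Hlt; exfalso.
have Hdiff : n.+1 %| gval 2 n.+1 - m.+1.
  have Hfull : n + 1 %| \sum_(2 <= i < n) zval i + zval n.
    by rewrite -big_nat_recr ?sum_zval ?addn1 ?dvdn_mulr //; lia.
  have := dvdn_sub Hfull Hdvd; rewrite subnDl zvalE // addn1.
  by have := gval_pos 2 n.+1; case: (gval 2 n.+1).
rewrite zvalE // in Hlt.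
have Hlt' : m.+1 < gval 2 n.+1 by lia.
case: (gval_min (c := 2) isT (ltn0Sn n) Hlt' Hdiff) => // Em.
case: (leqP m 1) => Hm1.
  by apply: (Hm m (leq_ltn_trans Hm1 Hn1)); rewrite /zval Hm1.
have [i /andP [i_pos Hi] Ei] := gval_attained (c := 2) isT (v := m.+1) Hm1 (eq_leq Em).
have Hi3 : 2 < i by case: i i_pos Ei {Hi} => [|[|[|]]] // _ /(congr1 predn) /= Ei; lia.
case: i Hi Ei Hi3 {i_pos} => // j Hj Ej Hj2.
by apply: (Hm j); [lia | rewrite zvalE // Ej].
Qed.

Lemma zval_greedy : is_z zval.
Proof.
apply: greedy_seqI => // [i n|n Hn|]; first exact: zval_inj; last exact: zval_min.
by rewrite sum_zval // addn1 dvdn_mulr.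
Qed.

(* a(a + n) = n^2 forces n = 0 (the golden ratio is irrational); the
   descent is (n, a) -> (a, n - a). *)
Lemma golden_irrational n x : x * (x + n) = n * n -> n = 0.
Proof.
elim/ltn_ind: n x => n IH x E.
case: (posnP n) => // Hn.
have Hx : x < n by nia.
case: (posnP x) => Hx0; first by move: E; rewrite Hx0; nia.
have E' : (n - x) * (n - x + x) = x * x by nia.
by have := IH x Hx (n - x) E'; lia.
Qed.

Lemma fibSS k : fib k.+2 = fib k.+1 + fib k.
Proof. by []. Qed.

(* The solutions of m(m + N) + 1 = N^2 and m(m + N) = N^2 + 1 are
   consecutive Fibonacci numbers, by the same descent. *)
Lemma cassini_solutions N : forall m,
  (m * (m + N) + 1 = N * N -> exists k, N = fib k.*2.+1 /\ m = fib k.*2) /\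
  (0 < N -> m * (m + N) = N * N + 1 -> exists k, N = fib k.*2.+2 /\ m = fib k.*2.+1).
Proof.
elim/ltn_ind: N => N IH m; split => [E | HN E].
  case: (posnP m) => Hm; first by exists 0; rewrite Hm /= in E *; nia.
  have HmN : m < N by nia.
  have E' : (N - m) * (N - m + m) = m * m + 1 by nia.
  have [k [Em Ex]] := proj2 (IH m HmN (N - m)) Hm E'.
  by exists k.+1; rewrite doubleS fibSS; lia.
case: (leqP N 1) => HN1.
  have N1 : N = 1 by lia.
  by exists 0; rewrite N1 in E *; split => //=; nia.
have HmN : m < N by nia.
have E' : (N - m) * (N - m + m) + 1 = m * m by nia.
have [k [Em Ex]] := proj1 (IH m HmN (N - m)) E'.
by exists k; rewrite fibSS; lia.
Qed.

Lemma cassini k :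
  fib k.*2 * (fib k.*2 + fib k.*2.+1) + 1 = fib k.*2.+1 * fib k.*2.+1 /\
  fib k.*2.+1 * (fib k.*2.+1 + fib k.*2.+2) = fib k.*2.+2 * fib k.*2.+2 + 1.
Proof.
elim: k => [|k [IH1 IH2]] //; rewrite doubleS.
rewrite !fibSS in IH2 *.
by move: (fib k.*2) (fib k.*2.+1) IH1 IH2 => x y H1 H2; split; nia.
Qed.

Lemma odd_fib_char n :
  (exists a, a * (a + n) + 1 = n * n) <-> exists k, n = fib k.*2.+1.
Proof.
split=> [[a /(proj1 (cassini_solutions n a)) [k [-> _]]] | [k ->]]; first by exists k.
by exists (fib k.*2); case: (cassini k).
Qed.

(* If z(n) = f(n) with n >= 2, both steps are large and r_0(n) = r_2(n + 1);
   the bounds on r_2(n) = r_0(n) - 1 then force a(a + n) + 1 = n^2. *)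
Lemma agreement_cassini n : 1 < n -> zval n = fval n ->
  qroot 0 n * (qroot 0 n + n) + 1 = n * n.
Proof.
move=> Hn; have Hn0 : 0 < n by lia.
rewrite zvalE // (_ : fval n = gval 0 n); last by case: n Hn {Hn0}.
have HA := qroot_lt (c := 0) isT Hn0; have HB := qroot_lt (c := 2) isT (ltn0Sn n).
have HBA := qroot_antimono n (isT : 2 <= 2) (isT : 0 <= 2).
case: (gval_cases (c := 0) isT Hn0) => -[EA GA];
  case: (gval_cases (c := 2) isT (ltn0Sn n)) => -[EB GB];
  rewrite succnK in EB; rewrite GA GB => E; try lia.
have a_pos : 0 < qroot 0 n by rewrite EA.
have Up := qroot_upper (c := 2) isT n.
rewrite (_ : qroot 2 n = (qroot 0 n).-1) in Up; last lia.
have Lo := qroot_lower (c := 0) isT (leq0n (n * n)).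
have Ne : qroot 0 n * (qroot 0 n + n) <> n * n by move/golden_irrational; lia.
by move: (qroot 0 n) a_pos Up Lo Ne => a a_pos; rewrite addn0 prednK //; nia.
Qed.

(* Conversely a solution of a(a + n) + 1 = n^2 gives r_0(n) = r_2(n + 1) = a
   with large steps, hence z(n) = n + a = f(n). *)
Lemma cassini_agreement n a : 1 < n -> a * (a + n) + 1 = n * n -> zval n = fval n.
Proof.
move=> Hn Ea; have Hn0 : 0 < n by lia.
rewrite zvalE // (_ : fval n = gval 0 n); last by case: n Hn {Hn0 Ea}.
have a_pos : 0 < a by nia.
have a_lt : a < n by nia.
have A_n : qroot 0 n = a by apply: qroot_eq => //; nia.
have A_n1 : qroot 0 n.-1 <= a.-1 by apply/qroot_leP => //; rewrite prednK; nia.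
have B_n1 : qroot 2 n.+1 = a by apply: qroot_eq => //; nia.
have B_n : qroot 2 n <= a.-1 by apply/qroot_leP => //; rewrite prednK; nia.
case: (gval_cases (c := 0) isT Hn0) => -[EA ->];
  case: (gval_cases (c := 2) isT (ltn0Sn n)) => -[EB ->]; rewrite succnK in EB; lia.
Qed.

Theorem mainTheorem8 (f z : nat -> nat) :
  is_f f -> is_z z ->
  forall n : nat, z n = f n <-> (n = 0 \/ exists k : nat, n = fib k.*2.+1).
Proof.
move=> Hf Hz n.
rewrite (greedy_unique Hf fval_greedy) (greedy_unique Hz zval_greedy).
case: (leqP n 1) => Hn.
  by case: n Hn => [|[|]] // _; split=> // _; [left | right; exists 0].
rewrite -odd_fib_char; split=> [E | [n0 | [a /(cassini_agreement Hn)]]] //; last lia.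
by right; exists (qroot 0 n); apply: agreement_cassini.
Qed.
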